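(* Let $Y$ be the colimit of a sequence $Y_1\subset Y_2\subset\cdots$ of spaces. Assume that each $Y_n$ is paracompact and closed in $Y$, that each $Y_n\subset Y_{n+1}$ is a neighbourhood retract, and that each $Y_{n+1}\setminus Y_n$ is paracompact and Hausdorff. Then $Y$ is paracompact.
   Context: A space is called paracompact if every open cover admits a subordinate locally finite partition of unity. *)

From HB Require Import structures.
From mathcomp Require Import all_boot all_order all_algebra.
From mathcomp Require Import all_classical all_reals all_analysis.
Set Implicit Arguments. Unset Strict Implicit. Unset Printing Implicit Defensive.
Import Order.TTheory GRing.Theory Num.Theory numFieldNormedType.Exports.
Local Open Scope classical_set_scope.
Local Open Scope ring_scope.

Definition fsupport {R : realType} {T : topologicalType} (g : T -> R) : set T :=
  closure [set x | g x != 0].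

Definition lf_partition_of_unity_subordinate (R : realType) (T : topologicalType)
    (I : choiceType) (f : I -> T -> R) (J : Type) (U : J -> set T) : Prop :=
  [/\ (forall i, continuous (f i)),
      (forall i x, 0 <= f i x),
      (forall x : T, exists2 N : set T, nbhs x N &
          finite_set [set i | N `&` fsupport (f i) !=set0]),
      (forall x, \sum_(i \in [set: I]) f i x = 1) &
      (forall i, exists j, fsupport (f i) `<=` U j)].

Definition paracompact (R : realType) (T : topologicalType) : Prop :=
  forall (J : Type) (U : J -> set T),
    (forall j, open (U j)) -> \bigcup_j U j = setT ->
    exists (I : choiceType) (f : I -> T -> R),
      lf_partition_of_unity_subordinate f U.

Definition colimit_topology (Y : topologicalType) (Yn : nat -> set Y) : Prop :=
  forall U : set Y, (forall n, @open (subspace (Yn n)) (U `&` Yn n)) -> open U.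

Definition nbhd_retract (Y : topologicalType) (A B : set Y) : Prop :=
  exists V : set Y, [/\ A `<=` V, V `<=` B, @open (subspace B) V &
    exists r : Y -> Y, [/\ {within V, continuous r}, r @` V `<=` A &
      forall x, A x -> r x = x]].

(* Fix an open cover U of Y. We build, level by level, locally finite partitions
   of unity Phi_p of Y_p subordinate to U, each extending the previous one. Given
   Phi_p, a retraction r : V -> Y_p of a neighbourhood V of Y_p in Y_{p+1} and any
   partition of unity Psi of Y_{p+1} subordinate to U, put
     Phi_{p+1} = lambda * (Phi_p o r) + (1 - lambda) * Psi,
   where the cutoff lambda, obtained from the paracompactness of Y_{p+1}, is 1 on
   Y_p and vanishes off the open set of those v in V for which r v lying in the
   support of a function forces v into the open set of U attached to it. Then
   Phi_{p+1} agrees with Phi_p on Y_p and acquires no new supports near Y_p, so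
   the union of the Phi_p is continuous and locally finite in the colimit
   topology. *)

From HB Require Import structures.
From mathcomp Require Import all_boot all_order all_algebra.
From mathcomp Require Import all_classical all_reals all_analysis.
From mathcomp Require Import finmap lra.
Import Order.TTheory GRing.Theory Num.Theory numFieldNormedType.Exports.
Local Open Scope classical_set_scope.

Lemma dependent_choice_nat {T : Type} (P : nat -> T -> Prop)
    (Q : nat -> T -> T -> Prop) (t0 : T) :
  P 0 t0 -> (forall n t, P n t -> exists2 t', P n.+1 t' & Q n t t') ->
  exists f : nat -> T, [/\ f 0 = t0, forall n, P n (f n) &
                          forall n, Q n (f n) (f n.+1)].
Proof.
move=> P0 step.
have next (nt : nat * T) : exists t', P nt.1 nt.2 -> P nt.1.+1 t' /\ Q nt.1 nt.2 t'.
  case: nt => n t; have [Pt|nPt] := pselect (P n t); last by exists t.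
  by have [t' ? ?] := step n t Pt; exists t'.
have [g gP] := choice next.
pose f := fix f n := if n is m.+1 then g (m, f m) else t0.
have fP n : P n (f n) by elim: n => [|n IH] //; exact: (gP (n, f n) IH).1.
by exists f; split=> // n; exact: (gP (n, f n) (fP n)).2.
Qed.

Lemma subset_chain {T : Type} {A : nat -> set T} :
  (forall n, A n `<=` A n.+1) -> forall m n, (m <= n)%N -> A m `<=` A n.
Proof.
move=> incA m n /subnKC <-; elim: (n - m)%N => [|d IH]; first by rewrite addn0.
by rewrite addnS => z /IH /incA.
Qed.

Lemma bigcup_compatibleI {T : Type} (A M : nat -> set T) :
  (forall n, A n `<=` A n.+1) -> (forall n, M n.+1 `&` A n = M n `&` A n) ->
  forall n, (\bigcup_d (M d `&` A d)) `&` A n = M n `&` A n.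
Proof.
move=> incA MA n.
have incAn m d : A m `<=` A (m + d) by apply: subset_chain; rewrite ?leq_addr.
have stable m d : M (m + d) `&` A m = M m `&` A m.
  elim: d => [|d IH]; first by rewrite addn0.
  rewrite -IH addnS; apply/seteqP; split=> z [Mz Amz].
    have : (M (m + d).+1 `&` A (m + d)) z by split=> //; exact: incAn.
    by rewrite MA => -[].
  have : (M (m + d) `&` A (m + d)) z by split=> //; exact: incAn.
  by rewrite -MA => -[].
apply/seteqP; split=> [z [[d _ [Mdz Adz]] Anz]|z [Mnz Anz]]; last first.
  by split=> //; exists n.
have [nd|dn] := leqP n d.
  by have := stable n (d - n)%N; rewrite subnKC // => <-.
have : (M (d + (n - d)) `&` A d) z by rewrite stable.
by rewrite subnKC ?(ltnW dn) // => -[].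
Qed.

Section Sums.
Context {R : realType}.
Local Open Scope ring_scope.

Lemma fsbigT_lincomb {I : choiceType} (f g : I -> R) (a b : R) :
  finite_set [set i | f i != 0] -> finite_set [set i | g i != 0] ->
  \sum_(i \in [set: I]) (a * f i + b * g i) =
  a * \sum_(i \in [set: I]) f i + b * \sum_(i \in [set: I]) g i.
Proof.
move=> ff fg.
have fU : finite_set ([set i | f i != 0] `|` [set i | g i != 0]).
  by rewrite finite_setU.
pose S := fset_set ([set i | f i != 0] `|` [set i | g i != 0]).
have out i : i \notin S -> f i = 0 /\ g i = 0.
  rewrite in_fset_set // => h; split; apply/eqP; apply: contraT => nz;
  move: h; rewrite mem_set //; [left|right]; exact: nz.
rewrite (fsbigTE S); last by move=> i /out [-> ->]; rewrite !mulr0 addr0.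
rewrite (fsbigTE S f); last by move=> i /out [].
rewrite (fsbigTE S g); last by move=> i /out [].
by rewrite big_split /= !mulr_sumr.
Qed.

Lemma continuous_fsbig_locally_finite {T : topologicalType} (I : choiceType)
    (f : I -> T -> R) (P : set I) :
  (forall i, continuous (f i)) ->
  (forall x : T, exists2 N : set T, nbhs x N &
     finite_set [set i | N `&` fsupport (f i) !=set0]) ->
  continuous (fun x => \sum_(i \in P) f i x).
Proof.
move=> fc lf x; have [N Nx Nfin] := lf x.
pose F := fset_set [set i | N `&` fsupport (f i) !=set0].
have sumE z : N z -> \sum_(i \in P) f i z =
    \sum_(i <- enum_fset F) (if i \in P then f i z else 0).
  move=> Nz; rewrite fsbig_mkcond (fsbigTE F) // => i iF.
  rewrite /patch; case: ifP => // _; apply/eqP; apply: contraNT iF => fi0.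
  rewrite in_fset_set //; apply/mem_set; exists z; split=> //.
  exact: subset_closure.
rewrite /continuous_at sumE; last exact: nbhs_singleton.
have seq_cvg : (fun z => \sum_(i <- enum_fset F) (if i \in P then f i z else 0))
    @ x --> \sum_(i <- enum_fset F) (if i \in P then f i x else 0).
  apply: (cvg_big add_continuous) => // i _.
  by case: ifP => _; [exact: fc | exact: cvg_cst].
apply: cvg_trans seq_cvg.
by apply: near_eq_cvg; near=> z; rewrite sumE //; near: z.
Unshelve. all: by end_near.
Qed.

Lemma paracompact_urysohn {T : topologicalType} {C O : set T} :
  paracompact R T -> closed C -> open O -> C `<=` O ->
  exists f : T -> R, [/\ continuous f, forall t, C t -> f t = 0 &
                        forall t, ~ O t -> f t = 1].
Proof.
move=> Tpara Cclosed Oopen CO.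
pose W (b : bool) := if b then O else ~` C.
have Wopen b : open (W b) by case: b => //; rewrite openC.
have Wcover : \bigcup_b W b = setT.
  apply/seteqP; split=> // t _; have [Ot|nOt] := pselect (O t).
    by exists true.
  by exists false => // Ct; exact/nOt/CO.
have [I [f [fc _ flf fsum fsub]]] := Tpara bool W Wopen Wcover.
have [j jW] := choice fsub.
have f0 i t : ~ W (j i) t -> f i t = 0.
  move=> nWt; have [//|fit0] := eqVneq (f i t) 0.
  by exfalso; apply/nWt/jW; exact: subset_closure.
exists (fun t => \sum_(i \in [set i | j i = false]) f i t); split.
- exact: continuous_fsbig_locally_finite.
- by move=> t Ct; apply: fsbig1 => i /= ji; apply: f0; rewrite ji.
- move=> t nOt; rewrite -(fsum t); apply: fsbig_widen => // i [_ /= ji].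
  by apply: f0; case: (j i) ji.
Qed.

End Sums.

Section Topology.
Context {T : topologicalType}.

Lemma open_closureI_neq0 (M S : set T) :
  open M -> M `&` closure S !=set0 -> M `&` S !=set0.
Proof.
move=> Mo [z [Mz cz]]; rewrite setIC; apply: cz.
exact: open_nbhs_nbhs.
Qed.

Lemma open_closureI_eq0 (M S : set T) :
  open M -> M `&` S = set0 -> M `&` closure S = set0.
Proof.
move=> Mo MS; apply/eqP/negPn/negP => /set0P/(open_closureI_neq0 _ _ Mo).
by rewrite MS => -[].
Qed.

Lemma near_within_open {A : set T} {t : T} {P : T -> Prop} :
  (\forall z \near within A (nbhs t), P z) ->
  exists2 M : set T, open_nbhs t M & forall z, M z -> A z -> P z.
Proof.
move=> /nbhs_interior tP; exists (interior (fun z => A z -> P z)) => //.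
- by split; [exact: open_interior | exact: nbhs_singleton].
- by move=> z /interior_subset.
Qed.

Lemma open_subspace_near (A S : set T) :
  (forall t, A t -> S t -> \forall z \near within A (nbhs t), S z) ->
  open (S : set (subspace A)).
Proof.
move=> Snear; rewrite openE => t St; rewrite /interior.
by case: (nbhs_subspaceP A t) => [At|_]; [exact: Snear | move=> z ->].
Qed.

Lemma near_within_open_subspace {B V : set T} {t : T} {P : T -> Prop} :
  open (V : set (subspace B)) -> V t -> B t ->
  (\forall z \near within V (nbhs t), P z) ->
  \forall z \near within B (nbhs t), P z.
Proof.
move=> Vo Vt Bt tP.
have BV : within B (nbhs t) V.
  by rewrite (nbhs_subspace_in Bt); exact: (@open_nbhs_nbhs (subspace B)).
exact: (filterS2 _ (fun z (BV : B z -> V z) (VP : V z -> P z) Bz => VP (BV Bz))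
  BV tP).
Qed.

Lemma near_within_mem_open_subspace {B V : set T} {t : T} :
  open (V : set (subspace B)) -> V t -> B t ->
  \forall z \near within B (nbhs t), V z.
Proof.
by move=> Vo Vt Bt; apply: near_within_open_subspace Vo Vt Bt _; exact: withinT.
Qed.

Lemma near_within_comp_open_subspace {S : topologicalType} {B V : set T}
    {r : T -> S} {t : T} {P : set S} :
  open (V : set (subspace B)) -> V t -> B t -> {within V, continuous r} ->
  nbhs (r t) P -> \forall z \near within B (nbhs t), P (r z).
Proof.
move=> Vo Vt Bt rc rtP.
exact: near_within_open_subspace Vo Vt Bt ((subspace_continuousP _ _).1 rc t Vt P rtP).
Qed.

End Topology.

Section RealTopology.
Context {R : realType} {T : topologicalType}.
Local Open Scope ring_scope.

Lemma near_within_lt {B : set T} {g : T -> R} {t : T} {c : R} :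
  {within B, continuous g} -> B t -> g t < c ->
  \forall z \near within B (nbhs t), g z < c.
Proof.
move=> gc Bt gtc; have gtcvg := (subspace_continuousP _ _).1 gc t Bt.
have : nbhs (g t) [set u | u < c].
  by apply: open_nbhs_nbhs; split=> //; exact: open_lt.
exact: gtcvg.
Qed.

Lemma near_within_gt {B : set T} {g : T -> R} {t : T} {c : R} :
  {within B, continuous g} -> B t -> c < g t ->
  \forall z \near within B (nbhs t), c < g z.
Proof.
move=> gc Bt gtc; have gtcvg := (subspace_continuousP _ _).1 gc t Bt.
have : nbhs (g t) [set u | c < u].
  by apply: open_nbhs_nbhs; split=> //; exact: open_gt.
exact: gtcvg.
Qed.

(* Unlike [fsupport] on [subspace A], the closure is taken in the whole space,
   so local finiteness can be witnessed by open sets of the whole space, as the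
   colimit topology requires. *)
Definition fsupport_in (A : set T) (g : T -> R) : set T :=
  closure (A `&` [set t | g t != 0]).

Lemma fsupport_in_closed (A : set T) (g : T -> R) : closed (fsupport_in A g).
Proof. exact: closed_closure. Qed.

Lemma fsupport_in_sub {A : set T} {g : T -> R} :
  closed A -> fsupport_in A g `<=` A.
Proof.
by move=> Ac; rewrite [X in _ `<=` X](closure_id A).1 //; apply: closureS.
Qed.

Lemma mem_fsupport_in {A : set T} {g : T -> R} {t : T} :
  A t -> g t != 0 -> fsupport_in A g t.
Proof. by move=> At gt0; apply: subset_closure. Qed.

Lemma fsupport_in_le (A B : set T) (g h : T -> R) :
  A `<=` B -> (forall t, A t -> g t != 0 -> h t != 0) ->
  fsupport_in A g `<=` fsupport_in B h.
Proof. by move=> AB gh; apply: closureS => t [At gt]; split; [exact: AB|exact: gh]. Qed.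

Lemma fsupport_in_subspace {A : set T} {g : T -> R} :
  closed A -> fsupport_in A g `<=` @fsupport R (subspace A) g.
Proof.
move=> Ac t sgt; have At := fsupport_in_sub Ac _ sgt.
apply: (@closureS (subspace A) (A `&` [set t | g t != 0])); first exact: subIsetr.
by rewrite closure_subspaceW; [split | exact: subIsetl].
Qed.

End RealTopology.

Section PartitionOfUnityOn.
Context {R : realType} {Y : topologicalType}.
Local Open Scope ring_scope.

Lemma fsupport_in_cst0 (A : set Y) : fsupport_in A (fun=> 0 : R) = set0.
Proof.
rewrite /fsupport_in (_ : _ `&` _ = set0) ?closure0 //.
by apply/seteqP; split=> // y [_]; rewrite /= eqxx.
Qed.

(* The cover is indexed by the partition's own index set, so that all stages of
   the construction below use the same open set for a given index. *)
Record pou_on {X : choiceType} (U : X -> set Y) (A : set Y)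
    (Phi : X -> Y -> R) : Prop := {
  pou_cont : forall x, {within A, continuous Phi x};
  pou_ge0 : forall x y, 0 <= Phi x y;
  pou_lfin : forall y, A y -> exists2 M : set Y, open_nbhs y M &
    finite_set [set x | M `&` fsupport_in A (Phi x) !=set0];
  pou_sum1 : forall y, A y -> \sum_(x \in [set: X]) Phi x y = 1;
  pou_sub : forall x, fsupport_in A (Phi x) `<=` U x }.

Record pou_extension {X : choiceType} (A B : set Y)
    (Phi Psi : X -> Y -> R) : Prop := {
  ext_agree : forall x y, A y -> Psi x y = Phi x y;
  (* Open sets avoiding the supports of Phi near A can be replaced by open sets
     with the same trace on A avoiding the supports of Psi: this is what keeps
     the glued family locally finite. *)
  ext_nbhs : forall M : set Y, open M -> exists2 M' : set Y, open M' &
    M' `&` A = M `&` A /\ forall x, M `&` fsupport_in A (Phi x) = set0 ->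
                                   M' `&` fsupport_in B (Psi x) = set0 }.

End PartitionOfUnityOn.

Arguments pou_cont {R Y X U A Phi}.
Arguments pou_ge0 {R Y X U A Phi}.
Arguments pou_lfin {R Y X U A Phi}.
Arguments pou_sum1 {R Y X U A Phi}.
Arguments pou_sub {R Y X U A Phi}.
Arguments ext_agree {R Y X A B Phi Psi}.
Arguments ext_nbhs {R Y X A B Phi Psi}.

Section PartitionOfUnityOnTheory.
Context {R : realType} {Y : topologicalType}.
Local Open Scope ring_scope.

Lemma ext_fsupport {X : choiceType} {A B : set Y} {Phi Psi : X -> Y -> R} (x : X) :
  pou_extension A B Phi Psi ->
  fsupport_in B (Psi x) `&` A `<=` fsupport_in A (Phi x).
Proof.
move=> ext a [Psia Aa]; apply: contrapT => nPhia.
have [M' _ [M'A M'sub]] := ext_nbhs ext _ (closed_openC (fsupport_in_closed A (Phi x))).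
have : (M' `&` A) a by rewrite M'A.
case=> M'a _; suff : (M' `&` fsupport_in B (Psi x)) a by rewrite (M'sub x (setICl _)).
by split.
Qed.

Lemma pou_finite_neq0 {X : choiceType} {U : X -> set Y} {A : set Y}
    {Phi : X -> Y -> R} {y : Y} :
  pou_on U A Phi -> A y -> finite_set [set x | Phi x y != 0].
Proof.
move=> Phi_pou Ay; have [M [_ My] Mfin] := pou_lfin Phi_pou y Ay.
apply: sub_finite_set Mfin => x /= Phi0.
by exists y; split=> //; exact: mem_fsupport_in.
Qed.

Lemma pou_on_subspace {I : choiceType} {f : I -> Y -> R} {J : Type}
    {U : J -> set Y} {A : set Y} :
  closed A -> @lf_partition_of_unity_subordinate R (subspace A) I f J U ->
  exists j : I -> J, pou_on (U \o j) A f.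
Proof.
move=> Ac [fc fge0 flf fsum fsub]; have [j jU] := choice fsub.
exists j; split=> //; last by move=> i z /(fsupport_in_subspace Ac) /jU.
move=> y Ay; have [N Ny Nfin] := flf y.
have [V Vy NV] := (@nbhs_subspace_ex Y A N y Ay).1 Ny.
exists (interior V).
  by split; [exact: open_interior | exact: nbhs_singleton (nbhs_interior Vy)].
apply: sub_finite_set Nfin => i [z [Vz sz]]; exists z; split.
  have : (V `&` A) z.
    by split; [exact: interior_subset | exact: fsupport_in_sub Ac _ sz].
  by rewrite -NV => -[].
exact: fsupport_in_subspace.
Qed.

Section LevelFamily.
Variables (Ik : nat -> choiceType) (chi : forall k, Ik k -> Y -> R).

Definition level_family (k : nat) (x : {k : nat & Ik k}) : Y -> R :=
  if tag x == k then chi (tag x) (tagged x) else fun=> 0.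

Lemma level_familyE k (i : Ik k) : level_family k (Tagged Ik i) = chi k i.
Proof. by rewrite /level_family /= eqxx. Qed.

Lemma level_family_neq k x : tag x != k -> level_family k x = fun=> 0.
Proof. by rewrite /level_family => /negbTE ->. Qed.

Lemma pou_on_level_family (V : forall k, Ik k -> set Y) (A : set Y) (k : nat) :
  pou_on (V k) A (chi k) ->
  pou_on (fun x => V (tag x) (tagged x)) A (level_family k).
Proof.
case=> chic chige0 chilf chisum chisub; split.
- case=> k' i; have [kk'|k'k] := eqVneq k' k; last first.
    by rewrite level_family_neq //; exact: cst_continuous.
  by subst k'; rewrite level_familyE; exact: chic.
- case=> k' i y; have [kk'|k'k] := eqVneq k' k; last by rewrite level_family_neq.
  by subst k'; rewrite level_familyE; exact: chige0.
- move=> y Ay; have [M My Mfin] := chilf y Ay; exists M => //.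
  apply: sub_finite_set (finite_image (Tagged Ik) Mfin) => -[k' i] /=.
  have [kk'|k'k] := eqVneq k' k; last first.
    by rewrite level_family_neq ?fsupport_in_cst0 // setI0 => -[].
  by subst k'; rewrite level_familyE => ?; exists i.
- move=> y Ay; rewrite -(fsbig_widen (range (@Tagged nat k Ik))) //; last first.
    move=> [k' i] [_ /= notin]; have [kk'|k'k] := eqVneq k' k.
      by subst k'; exfalso; apply: notin; exists i.
    by rewrite level_family_neq.
  rewrite fsbig_image; last by move=> i j _ _; exact: eq_from_Tagged.
  by under eq_fsbigr do rewrite level_familyE; exact: chisum.
- case=> k' i; have [kk'|k'k] := eqVneq k' k; last first.
    by rewrite level_family_neq // fsupport_in_cst0.
  by subst k'; rewrite level_familyE; exact: chisub.
Qed.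

End LevelFamily.

End PartitionOfUnityOnTheory.

Section Extension.
Context {R : realType} {Y : topologicalType} {X : choiceType} {U : X -> set Y}.
Local Open Scope ring_scope.
Hypothesis U_open : forall x, open (U x).
Context {A B V : set Y} {r : Y -> Y}.
Hypotheses (A_closed : closed A) (B_closed : closed B).
Hypotheses (AV : A `<=` V) (VB : V `<=` B) (V_open : open (V : set (subspace B))).
Hypotheses (r_cont : {within V, continuous r}) (rV : r @` V `<=` A)
  (rK : forall a, A a -> r a = a).
Context {Phi Psi : X -> Y -> R}.
Hypotheses (Phi_pou : pou_on U A Phi) (Psi_pou : pou_on U B Psi).

Definition safe_retract : set Y :=
  [set v | V v /\ forall x, fsupport_in A (Phi x) (r v) -> U x v].

Lemma retract_mem {v} : V v -> A (r v).
Proof. by move=> Vv; apply: rV; exists v. Qed.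

Lemma sub_safe_retract : A `<=` safe_retract.
Proof. by move=> a Aa; split=> [|x]; [exact: AV | rewrite rK //; exact: pou_sub]. Qed.

Lemma open_safe_retract : open (safe_retract : set (subspace B)).
Proof.
apply: open_subspace_near => v Bv [Vv vsafe].
have [M [Mo Mrv] Mfin] := pou_lfin Phi_pou (r v) (retract_mem Vv).
pose F := fset_set [set x | M `&` fsupport_in A (Phi x) !=set0].
have nearU : \forall z \near within B (nbhs v),
    (\bigcap_(x in [set` F]) [set z | fsupport_in A (Phi x) (r z) -> U x z]) z.
  apply: filter_bigI => x _.
  have [rvx|nrvx] := pselect (fsupport_in A (Phi x) (r v)).
    have : nbhs v (U x) by apply: open_nbhs_nbhs; split; [exact: U_open|exact: vsafe].
    by apply: filterS => z Uz _ _.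
  have : nbhs (r v) (~` fsupport_in A (Phi x)).
    by apply: open_nbhs_nbhs; split=> //; exact/closed_openC/fsupport_in_closed.
  move=> /(near_within_comp_open_subspace V_open Vv Bv r_cont).
  by apply: filterS => z nrzx /nrzx.
near=> z; split; first by near: z; exact: near_within_mem_open_subspace.
move=> x rzx; apply: (near nearU z) => //.
rewrite /= in_fset_set //; apply/mem_set; exists (r z); split=> //.
near: z; apply: near_within_comp_open_subspace V_open Vv Bv r_cont _.
exact: open_nbhs_nbhs.
Unshelve. all: by end_near.
Qed.

Section Cutoff.
Variable sig : Y -> R.
Hypotheses (sig_cont : {within B, continuous sig})
  (sig0 : forall a, A a -> sig a = 0) (sig1 : forall y, ~ safe_retract y -> sig y = 1).

(* 1 where sig < 1/3, in particular on A, and 0 where sig > 2/3; the gap keeps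
   the support of [pullback] inside [safe_retract]. *)
Definition cutoff y : R := Num.min 1 (Num.max 0 (2 - 3 * sig y)).

Lemma cutoff_ge0 y : 0 <= cutoff y.
Proof. by rewrite /cutoff !minEle !maxEle; case: ifP; case: ifP => ? ?; lra. Qed.

Lemma cutoff_le1 y : cutoff y <= 1.
Proof. by rewrite /cutoff !minEle !maxEle; case: ifP; case: ifP => ? ?; lra. Qed.

Lemma cutoff1 y : sig y < 1 / 3 -> cutoff y = 1.
Proof. by rewrite /cutoff !minEle !maxEle => ?; case: ifP; case: ifP => ? ?; lra. Qed.

Lemma cutoff0 y : 2 / 3 < sig y -> cutoff y = 0.
Proof. by rewrite /cutoff !minEle !maxEle => ?; case: ifP; case: ifP => ? ?; lra. Qed.

Lemma cutoff_neq0 {y} : cutoff y != 0 -> safe_retract y.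
Proof.
by move=> c0; apply: contrapT => /sig1 s1; move: c0; rewrite cutoff0 ?eqxx // s1; lra.
Qed.

Lemma cutoff_cont : {within B, continuous cutoff}.
Proof.
move=> y.
apply: (@continuous_min R (subspace B) (fun=> 1) (fun z => Num.max 0 (2 - 3 * sig z))).
  exact: cst_continuous.
apply: (@continuous_max R (subspace B) (fun=> 0) (fun z => 2 - 3 * sig z)).
  exact: cst_continuous.
by apply: cvgB; [exact: cvg_cst | apply: cvgM; [exact: cvg_cst | exact: sig_cont]].
Qed.

Lemma near_cutoff0 {y} : B y -> ~ V y ->
  \forall z \near within B (nbhs y), cutoff z = 0.
Proof.
move=> By nVy; have sy1 : sig y = 1 by apply: sig1 => -[].
have : 2 / 3 < sig y by rewrite sy1; lra.
by move=> /(near_within_gt sig_cont By); apply: filterS => z; exact: cutoff0.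
Qed.

Definition pullback x y := cutoff y * Phi x (r y).

Definition blend x y := pullback x y + (1 - cutoff y) * Psi x y.

Lemma pullback_neq0 {x y} : pullback x y != 0 ->
  [/\ V y, Phi x (r y) != 0 & cutoff y != 0].
Proof.
by rewrite mulf_eq0 negb_or => /andP[c0 Phi0]; have [] := cutoff_neq0 c0.
Qed.

Lemma pullback_cvg x y : B y ->
  pullback x @ within B (nbhs y) --> pullback x y.
Proof.
move=> By; have [Vy|nVy] := pselect (V y); last first.
  rewrite /pullback (cutoff0 _); last by rewrite sig1; [lra | case].
  rewrite mul0r; apply: cvg_near_cst.
  by apply: filterS (near_cutoff0 By nVy) => z; rewrite /pullback => ->; rewrite mul0r.
apply: cvgM; first exact: (subspace_continuousP _ _).1 cutoff_cont y By.
have r_cvg : r @ within B (nbhs y) --> within A (nbhs (r y)).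
  move=> S rS.
  have := near_within_comp_open_subspace V_open Vy By r_cont rS.
  have := near_within_mem_open_subspace V_open Vy By.
  by apply: filterS2 => z Vz; apply; exact: retract_mem.
exact: cvg_comp r_cvg
  ((subspace_continuousP _ _).1 (pou_cont Phi_pou x) _ (retract_mem Vy)).
Qed.

Lemma blend_cont x : {within B, continuous blend x}.
Proof.
apply/subspace_continuousP => y By; apply: cvgD; first exact: pullback_cvg.
apply: cvgM; last exact: (subspace_continuousP _ _).1 (pou_cont Psi_pou x) y By.
by apply: cvgB; [exact: cvg_cst | exact: (subspace_continuousP _ _).1 cutoff_cont y By].
Qed.

Lemma blend_ge0 x y : 0 <= blend x y.
Proof.
apply: addr_ge0; apply: mulr_ge0; rewrite ?cutoff_ge0 ?subr_ge0 ?cutoff_le1 //.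
  exact: (pou_ge0 Phi_pou).
exact: (pou_ge0 Psi_pou).
Qed.

Lemma fsupport_blend x :
  fsupport_in B (blend x) `<=` fsupport_in B (pullback x) `|` fsupport_in B (Psi x).
Proof.
rewrite /fsupport_in -closureU; apply: closureS => y [By]; rewrite /= /blend => b0.
have [p0|] := eqVneq (pullback x y) 0; last by left.
right; split=> //; move: b0; rewrite p0 add0r.
by apply: contraNneq => ->; rewrite mulr0.
Qed.

Lemma pullback_lfin {y} : B y -> exists2 M : set Y, open_nbhs y M &
  finite_set [set x | M `&` fsupport_in B (pullback x) !=set0].
Proof.
move=> By; have [Vy|nVy] := pselect (V y); last first.
  have [M My Mcutoff0] := near_within_open (near_cutoff0 By nVy).
  exists M => //; apply: sub_finite_set (finite_set0 X) => x /=.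
  case/(open_closureI_neq0 _ _ My.1) => z [Mz [Bz]].
  by rewrite /= /pullback (Mcutoff0 z Mz Bz) mul0r eqxx.
have [M [Mo Mry] Mfin] := pou_lfin Phi_pou (r y) (retract_mem Vy).
have Wo : open ([set w | V w /\ M (r w)] : set (subspace B)).
  apply: open_subspace_near => w Bw [Vw Mrw].
  have := near_within_mem_open_subspace V_open Vw Bw.
  have := near_within_comp_open_subspace V_open Vw Bw r_cont
    (open_nbhs_nbhs (conj Mo Mrw)).
  by apply: filterS2 => z Mrz Vz.
have [W WO WB] := (open_subspaceP _ _).1 Wo.
have Wy : W y by have : ([set w | V w /\ M (r w)] `&` B) y by []; rewrite -WB => -[].
exists W => //; apply: sub_finite_set Mfin => x /=.
case/(open_closureI_neq0 _ _ WO) => w [Ww [Bw pw0]].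
have : (W `&` B) w by []; rewrite WB => -[[Vw Mrw] _].
have [_ Phi0 _] := pullback_neq0 pw0.
by exists (r w); split=> //; apply: mem_fsupport_in => //; exact: retract_mem.
Qed.

Lemma blend_lfin y : B y -> exists2 M : set Y, open_nbhs y M &
  finite_set [set x | M `&` fsupport_in B (blend x) !=set0].
Proof.
move=> By; have [M1 [M1o M1y] M1fin] := pullback_lfin By.
have [M2 [M2o M2y] M2fin] := pou_lfin Psi_pou y By.
exists (M1 `&` M2); first by split; [exact: openI | split].
apply: (@sub_finite_set _ _ ([set x | M1 `&` fsupport_in B (pullback x) !=set0]
    `|` [set x | M2 `&` fsupport_in B (Psi x) !=set0])); last by rewrite finite_setU.
by move=> x [z [[M1z M2z] /fsupport_blend [] ?]]; [left | right]; exists z.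
Qed.

Lemma blend_sum1 y : B y -> \sum_(x \in [set: X]) blend x y = 1.
Proof.
move=> By; have [c0|c0] := eqVneq (cutoff y) 0.
  rewrite (eq_fsbigr (Psi^~ y)); first exact: (pou_sum1 Psi_pou).
  by move=> x _; rewrite /blend /pullback c0 mul0r add0r subr0 mul1r.
have ry := retract_mem (cutoff_neq0 c0).1.
rewrite /blend /pullback (fsbigT_lincomb (Phi^~ (r y)) (Psi^~ y)).
- by rewrite (pou_sum1 Phi_pou _ ry) (pou_sum1 Psi_pou _ By); lra.
- exact: pou_finite_neq0 Phi_pou ry.
- exact: pou_finite_neq0 Psi_pou By.
Qed.

Lemma fsupport_pullback_safe x : fsupport_in B (pullback x) `<=` safe_retract.
Proof.
have Cclosed : closed (B `&` [set w | sig w <= 2 / 3]).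
  have : closed ([set w | sig w <= 2 / 3] : set (subspace B)).
    rewrite -openC; apply: open_subspace_near => w Bw /negP; rewrite -ltNge => sw.
    by apply: filterS (near_within_gt sig_cont Bw sw) => z; rewrite ltNge => /negP.
  by case/closed_subspaceP => C Cc CB; rewrite setIC -CB; exact: closedI.
move=> z sz; have : (B `&` [set w | sig w <= 2 / 3]) z.
  rewrite (proj1 (closure_id _) Cclosed); apply: closureS sz => w [Bw pw0]; split=> //=.
  have [_ _ c0] := pullback_neq0 pw0; rewrite leNgt; apply/negP => sw.
  by move: c0; rewrite cutoff0 ?eqxx.
by case=> _ /= sz2; apply: contrapT => /sig1 sz1; move: sz2; rewrite sz1; lra.
Qed.

Lemma fsupport_pullback_retract x z : V z ->
  fsupport_in B (pullback x) z -> fsupport_in A (Phi x) (r z).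
Proof.
move=> Vz sz N rzN; have Bz := VB _ Vz.
have : \forall w \near within B (nbhs z), V w /\ N (r w).
  exact: (filterS2 _ (fun w (Vw : B w -> V w) (Nrw : B w -> N (r w)) Bw =>
    conj (Vw Bw) (Nrw Bw)) (near_within_mem_open_subspace V_open Vz Bz)
    (near_within_comp_open_subspace V_open Vz Bz r_cont rzN)).
case/near_within_open => W [Wo Wz] WP.
have [w [Ww [Bw pw0]]] := open_closureI_neq0 _ _ Wo (ex_intro _ z (conj Wz sz)).
have [Vw Nrw] := WP w Ww Bw; have [_ Phi0 _] := pullback_neq0 pw0.
by exists (r w); split=> //; split=> //; exact: retract_mem.
Qed.

Lemma blend_sub x : fsupport_in B (blend x) `<=` U x.
Proof.
move=> z /fsupport_blend [sz|]; last exact: (pou_sub Psi_pou).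
have [Vz zU] := fsupport_pullback_safe x z sz.
exact/zU/fsupport_pullback_retract.
Qed.

Lemma blend_agree x a : A a -> blend x a = Phi x a.
Proof.
move=> Aa; have c1 : cutoff a = 1 by apply: cutoff1; rewrite sig0 //; lra.
by rewrite /blend /pullback c1 rK // mul1r subrr mul0r addr0.
Qed.

Lemma blend_nbhs (M : set Y) : open M -> exists2 M' : set Y, open M' &
  M' `&` A = M `&` A /\ forall x, M `&` fsupport_in A (Phi x) = set0 ->
                                 M' `&` fsupport_in B (blend x) = set0.
Proof.
move=> Mo; pose S := [set w | [/\ V w, M (r w) & sig w < 1 / 3]].
have So : open (S : set (subspace B)).
  apply: open_subspace_near => w Bw [Vw Mrw sw].
  have Vnear := near_within_mem_open_subspace V_open Vw Bw.
  have Mnear := near_within_comp_open_subspace V_open Vw Bw r_cont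
    (open_nbhs_nbhs (conj Mo Mrw)).
  have signear := near_within_lt sig_cont Bw sw.
  by near=> z; split; near: z.
have [W Wo WB] := (open_subspaceP _ _).1 So.
have SB w : W w -> B w -> [/\ V w, M (r w) & sig w < 1 / 3].
  by move=> Ww Bw; have : (W `&` B) w by []; rewrite WB => -[].
exists W => //; split.
  apply/seteqP; split=> a [Wa Aa]; have Ba := VB _ (AV _ Aa).
    by have [_ + _] := SB a Wa Ba; rewrite rK.
  have : (S `&` B) a.
    by split=> //; split; [exact: AV | rewrite rK | rewrite sig0 //; lra].
  by rewrite -WB => -[].
move=> x MPhi0; apply: open_closureI_eq0 => //.
apply/seteqP; split=> // w [Ww [Bw bw0]]; have [Vw Mrw sw] := SB w Ww Bw.
move: bw0; rewrite /= /blend /pullback cutoff1 // mul1r subrr mul0r addr0 => Phi0.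
have : (M `&` fsupport_in A (Phi x)) (r w).
  by split=> //; apply: mem_fsupport_in => //; exact: retract_mem.
by rewrite MPhi0.
Unshelve. all: by end_near.
Qed.

Lemma pou_on_blend : pou_on U B blend.
Proof.
split; [exact: blend_cont | exact: blend_ge0 | exact: blend_lfin |
        exact: blend_sum1 | exact: blend_sub].
Qed.

Lemma pou_extension_blend : pou_extension A B Phi blend.
Proof. by split; [exact: blend_agree | exact: blend_nbhs]. Qed.

End Cutoff.

Lemma pou_extension_exists : paracompact R (subspace B) ->
  exists2 Phi', pou_on U B Phi' & pou_extension A B Phi Phi'.
Proof.
move=> B_para.
have [sig [sig_cont sig0 sig1]] := paracompact_urysohn B_para
  (closed_subspaceW A_closed) open_safe_retract sub_safe_retract.
exists (blend sig); [exact: pou_on_blend | exact: pou_extension_blend].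
Qed.

End Extension.

Section Colimit.
Context {Y : topologicalType} {Yn : nat -> set Y}.
Hypothesis Yn_colim : colimit_topology Yn.

Lemma colimit_open (S : set Y) :
  (forall n, open (S : set (subspace (Yn n)))) -> open S.
Proof. by move=> So; apply: Yn_colim => n; rewrite open_subspaceIT. Qed.

Lemma colimit_closed (S : set Y) :
  (forall n, closed (S : set (subspace (Yn n)))) -> closed S.
Proof. by move=> Sc; rewrite -openC; apply: colimit_open => n; rewrite openC. Qed.

Lemma colimit_continuous {T : topologicalType} (f : Y -> T) :
  (forall n, {within Yn n, continuous f}) -> continuous f.
Proof.
move=> fc; apply/continuousP => S So; apply: colimit_open => n.
exact: (continuousP _).1 (fc n) S So.
Qed.

End Colimit.

Section Glue.
Context {R : realType} {Y : topologicalType} {X : choiceType} {U : X -> set Y}.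
Variable Yn : nat -> set Y.
Hypotheses (Yn_incr : forall n, Yn n `<=` Yn n.+1)
  (Yn_cover : \bigcup_n Yn n = setT) (Yn_colim : colimit_topology Yn).
Variable Phi : nat -> X -> Y -> R.
Hypotheses (Phi_pou : forall p, pou_on U (Yn p) (Phi p))
  (Phi_ext : forall p, pou_extension (Yn p) (Yn p.+1) (Phi p) (Phi p.+1)).

Lemma Phi_agree {p q} (x : X) {y : Y} :
  (p <= q)%N -> Yn p y -> Phi q x y = Phi p x y.
Proof.
move=> /subnKC <- yp; elim: (q - p)%N => [|d IH]; first by rewrite addn0.
rewrite addnS (ext_agree (Phi_ext _)) //.
exact: (subset_chain Yn_incr _ _ (leq_addr _ _)).
Qed.

Lemma fsupport_in_Phi_le {p q} (x : X) : (p <= q)%N ->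
  fsupport_in (Yn p) (Phi p x) `<=` fsupport_in (Yn q) (Phi q x).
Proof.
move=> pq; apply: fsupport_in_le; first exact: subset_chain.
by move=> y yp; rewrite (Phi_agree x pq yp).
Qed.

Lemma fsupport_in_Phi_restrict {p q} (x : X) : (p <= q)%N ->
  fsupport_in (Yn q) (Phi q x) `&` Yn p `<=` fsupport_in (Yn p) (Phi p x).
Proof.
move=> /subnKC <-; elim: (q - p)%N => [|d IH]; first by rewrite addn0 => z [].
rewrite addnS => z [sz zp]; apply: IH; split=> //.
apply: (ext_fsupport x (Phi_ext _)); split=> //.
exact: (subset_chain Yn_incr _ _ (leq_addr _ _)).
Qed.

Definition glued_support x := \bigcup_p fsupport_in (Yn p) (Phi p x).

Lemma glued_supportI q x z :
  glued_support x z -> Yn q z -> fsupport_in (Yn q) (Phi q x) z.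
Proof.
case=> p _ sz zq; have [pq|qp] := leqP p q; first exact: fsupport_in_Phi_le sz.
by apply: (fsupport_in_Phi_restrict x (ltnW qp)); split.
Qed.

Lemma glued_support_closed x : closed (glued_support x).
Proof.
apply: (colimit_closed Yn_colim) => n; apply/closed_subspaceP.
exists (fsupport_in (Yn n) (Phi n x)); first exact: fsupport_in_closed.
apply/seteqP; split=> z [sz zn]; split=> //; first by exists n.
exact: glued_supportI.
Qed.

Definition level (y : Y) : nat := xget 0%N [set n | Yn n y].

Lemma level_mem y : Yn (level y) y.
Proof.
apply: (@xgetPex _ 0%N [set n | Yn n y]); have : (\bigcup_n Yn n) y by rewrite Yn_cover.
by case=> n _ ?; exists n.
Qed.

Definition glued x y := Phi (level y) x y.

Lemma gluedE {q} (x : X) {y} : Yn q y -> glued x y = Phi q x y.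
Proof.
move=> yq; rewrite /glued; have [lq|ql] := leqP (level y) q.
  by rewrite (Phi_agree x lq (level_mem y)).
by rewrite (Phi_agree x (ltnW ql) yq).
Qed.

Lemma fsupport_glued x : fsupport (glued x) `<=` glued_support x.
Proof.
rewrite [X in _ `<=` X](closure_id _).1; last exact: glued_support_closed.
apply: closureS => y /= gy; exists (level y) => //.
by apply: mem_fsupport_in; [exact: level_mem | exact: gy].
Qed.

Lemma glued_cont x : continuous (glued x).
Proof.
apply: (colimit_continuous Yn_colim) => n.
apply: subspace_eq_continuous (pou_cont (Phi_pou n) x).
by move=> y /set_mem yn; rewrite /from_subspace (gluedE x yn).
Qed.

Lemma glued_nbhs m (M : set Y) : open M -> exists2 N : set Y, open N &
  N `&` Yn m = M `&` Yn m /\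
  forall x, M `&` fsupport_in (Yn m) (Phi m x) = set0 -> N `&` glued_support x = set0.
Proof.
move=> Mo.
(* N is assembled from the traces on the Yn (m + d) of open sets produced stage by
   stage by [ext_nbhs]; its trace on each Yn n is open, hence so is N. *)
pose Q d (O O' : set Y) := O' `&` Yn (m + d) = O `&` Yn (m + d) /\
  forall x, O `&` fsupport_in (Yn (m + d)) (Phi (m + d) x) = set0 ->
            O' `&` fsupport_in (Yn (m + d).+1) (Phi (m + d).+1 x) = set0.
have [Ms [Ms0 Mso MsQ]] := dependent_choice_nat (fun=> open) Q M Mo
  (fun d O Oo => ext_nbhs (Phi_ext (m + d)) O Oo).
pose N := \bigcup_d (Ms d `&` Yn (m + d)).
have NE : forall d, N `&` Yn (m + d) = Ms d `&` Yn (m + d).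
  apply: bigcup_compatibleI => [d|d]; last exact: (MsQ d).1.
  by rewrite addnS; exact: Yn_incr.
exists N; last split.
- apply: (colimit_open Yn_colim) => n; apply/open_subspaceP.
  exists (Ms (n - m)%N) => //.
  have sub : Yn n `<=` Yn (m + (n - m)).
    by apply: (subset_chain Yn_incr _ _); rewrite -leq_subLR.
  by rewrite -(setIidr sub) !setIA NE.
- by have := NE 0%N; rewrite addn0 Ms0.
- move=> x Mx0; apply/seteqP; split=> // z [[d _ [Msdz zmd]] gz].
  suff <- : Ms d `&` fsupport_in (Yn (m + d)) (Phi (m + d) x) = set0.
    by split=> //; exact: glued_supportI.
  elim: d {Msdz zmd} => [|d IH]; first by rewrite addn0 Ms0.
  by rewrite addnS; exact: (MsQ d).2.
Qed.

Lemma glued_lfin (y : Y) : exists2 N : set Y, nbhs y N &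
  finite_set [set x | N `&` fsupport (glued x) !=set0].
Proof.
have [M [Mo My] Mfin] := pou_lfin (Phi_pou (level y)) y (level_mem y).
have [N No [NM Ndisj]] := glued_nbhs (level y) M Mo.
exists N.
  apply: open_nbhs_nbhs; split=> //.
  have : (M `&` Yn (level y)) y by split=> //; exact: level_mem.
  by rewrite -NM => -[].
apply: sub_finite_set Mfin => x /= [z [Nz gz]]; apply: contrapT => Mx.
have : (N `&` glued_support x) z by split=> //; exact: fsupport_glued.
by rewrite Ndisj // -subset0 => w Mw; apply: Mx; exists w.
Qed.

Lemma glued_partition : lf_partition_of_unity_subordinate glued U.
Proof.
split.
- exact: glued_cont.
- by move=> x y; exact: (pou_ge0 (Phi_pou _)).
- exact: glued_lfin.
- by move=> y; rewrite -(pou_sum1 (Phi_pou _) y (level_mem y)).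
- by move=> x; exists x => z /fsupport_glued [p _ /(pou_sub (Phi_pou p))].
Qed.

End Glue.

Section Tower.
Context {R : realType} {Y : topologicalType} {Yn : nat -> set Y}.
Hypotheses (Yn_closed : forall n, closed (Yn n))
  (Yn_para : forall n, paracompact R (subspace (Yn n))).

Lemma pou_on_levels {J : Type} {U : J -> set Y} :
  (forall j, open (U j)) -> \bigcup_j U j = setT ->
  exists (X : choiceType) (j : X -> J) (chi : nat -> X -> Y -> R),
    forall k, pou_on (U \o j) (Yn k) (chi k).
Proof.
move=> Uo Ucov.
have level_pou k : {I : choiceType &
    {fj : (I -> Y -> R) * (I -> J) | pou_on (U \o fj.2) (Yn k) fj.1}}.
  have : exists (I : choiceType) (fj : (I -> Y -> R) * (I -> J)),
      pou_on (U \o fj.2) (Yn k) fj.1.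
    have [I [f fpart]] : exists (I : choiceType) (f : I -> Y -> R),
        @lf_partition_of_unity_subordinate R (subspace (Yn k)) I f J U.
      by apply: Yn_para => // j; exact: open_subspaceW.
    by have [j fj] := pou_on_subspace (Yn_closed k) fpart; exists I, (f, j).
  by case/cid => I /cid[fj fj_pou]; exists I, fj.
pose Ik k := projT1 (level_pou k); pose fj k := sval (projT2 (level_pou k)).
exists {k : nat & Ik k}, (fun x => (fj (tag x)).2 (tagged x)).
exists (level_family Ik (fun k => (fj k).1)) => k.
exact: (pou_on_level_family Ik _ (fun k i => U ((fj k).2 i)) _ _
  (svalP (projT2 (level_pou k)))).
Qed.

Lemma pou_tower {X : choiceType} {U : X -> set Y} {chi : nat -> X -> Y -> R} :
  (forall x, open (U x)) -> (forall n, nbhd_retract (Yn n) (Yn n.+1)) ->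
  (forall k, pou_on U (Yn k) (chi k)) ->
  exists Phi : nat -> X -> Y -> R, (forall p, pou_on U (Yn p) (Phi p)) /\
    forall p, pou_extension (Yn p) (Yn p.+1) (Phi p) (Phi p.+1).
Proof.
move=> Uo retr chi_pou.
have step p (Phi : X -> Y -> R) : pou_on U (Yn p) Phi ->
    exists2 Phi', pou_on U (Yn p.+1) Phi' & pou_extension (Yn p) (Yn p.+1) Phi Phi'.
  move=> Phi_pou; have [V [AV VB Vo [r [rc rV rK]]]] := retr p.
  by have := pou_extension_exists Uo (Yn_closed p) (Yn_closed p.+1) AV VB Vo rc rV rK
    Phi_pou (chi_pou p.+1) (Yn_para p.+1).
by have [Phi [_ ? ?]] := dependent_choice_nat _ _ _ (chi_pou 0%N) step; exists Phi.
Qed.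

End Tower.

Lemma lf_partition_of_unity_subordinate_comp {R : realType} {T : topologicalType}
    {I : choiceType} {f : I -> T -> R} {J K : Type} {U : J -> set T} (j : K -> J) :
  lf_partition_of_unity_subordinate f (U \o j) -> lf_partition_of_unity_subordinate f U.
Proof.
by case=> fc fge0 flf fsum fsub; split=> // i; have [k ?] := fsub i; exists (j k).
Qed.

Theorem lemmaA4 (R : realType) (Y : topologicalType) (Yn : nat -> set Y)
  (Hincr : forall n, Yn n `<=` Yn n.+1)
  (Hcover : \bigcup_n Yn n = setT)
  (Hcolim : colimit_topology Yn)
  (Hpara : forall n, paracompact R (subspace (Yn n)))
  (Hclosed : forall n, closed (Yn n))
  (Hretr : forall n, nbhd_retract (Yn n) (Yn n.+1))
  (Hdiff_para : forall n, paracompact R (subspace (Yn n.+1 `\` Yn n)))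
  (Hdiff_haus : forall n, hausdorff_space (subspace (Yn n.+1 `\` Yn n))) :
  paracompact R Y.
Proof.
move=> J U Uo Ucov.
have [X [j [chi chi_pou]]] := pou_on_levels Hclosed Hpara Uo Ucov.
have Ujo x : open ((U \o j) x) by exact: Uo.
have [Phi [Phi_pou Phi_ext]] := pou_tower Hclosed Hpara Ujo Hretr chi_pou.
exists X, (glued Yn Phi); apply: (lf_partition_of_unity_subordinate_comp j).
exact: glued_partition _ Hincr Hcover Hcolim _ Phi_pou Phi_ext.
Qed.
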